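(* Let $\{P^{[s,t]}_{ij,k}\}$, with initial point $x^{(0)}\in S$, be a discrete time quadratic stochastic process of type (A) or of type (B). For integers $0\le m<n$ and $i,j\in\mathbb{N}$ define $\mathbb{H}^{m,n}_{ij}=\sum_{l=1}^\infty P^{[m,n]}_{il,j}x^{(m)}_l$. Then each $(\mathbb{H}^{m,n}_{ij})_{i,j}$ is a stochastic matrix and the family $\{\mathbb{H}^{m,n}_{ij}\}$ is a Markov process, i.e. $\mathbb{H}^{m,l}_{ij}=\sum_{k=1}^\infty \mathbb{H}^{m,n}_{ik}\mathbb{H}^{n,l}_{kj}$ for all $m<n<l$ and all $i,j\in\mathbb{N}$.
   Context: $\mathbb{N}=\{1,2,\dots\}$; times are nonnegative integers. $\ell^1$ is the space of real sequences $x=(x_n)_{n\in\mathbb{N}}$ with $\|x\|_1=\sum_n|x_n|<\infty$, and $S=\{x\in\ell^1:x_n\ge0,\ \|x\|_1=1\}$. A discrete time quadratic stochastic process (q.s.p.) consists of an initial point $x^{(0)}=(x^{(0)}_n)\in S$ and numbers $P^{[s,t]}_{ij,k}$ ($i,j,k\in\mathbb{N}$; $s,t$ nonnegative integers with $t-s\ge1$) such that for all $s,t$: (1) $P^{[s,t]}_{ij,k}=P^{[s,t]}_{ji,k}$; (2) $P^{[s,t]}_{ij,k}\ge0$ and $\sum_{k=1}^\infty P^{[s,t]}_{ij,k}=1$; and (3) one of the following holds for all $s<r<t$ and all $i,j,k$: type (A): $P^{[s,t]}_{ij,k}=\sum_{m,l=1}^\infty P^{[s,r]}_{ij,m}P^{[r,t]}_{ml,k}x^{(r)}_l$;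 type (B): $P^{[s,t]}_{ij,k}=\sum_{m,l,g,h=1}^\infty P^{[s,r]}_{im,l}P^{[s,r]}_{jg,h}P^{[r,t]}_{lh,k}x^{(s)}_m x^{(s)}_g$. Here for $r\ge1$, $x^{(r)}_k=\sum_{i,j=1}^\infty P^{[0,r]}_{ij,k}x^{(0)}_ix^{(0)}_j$. A matrix is stochastic if its entries are nonnegative and each row sums to 1. *)

From Stdlib Require Import Reals.
From Coquelicot Require Import Coquelicot.
Open Scope R_scope.

(* Indices: the paper's index set N = {1,2,...} is relabelled as nat = {0,1,...}
   (i <-> i+1).  A q.s.p. is given by a total function
   P s t i j k  standing for  P^{[s,t]}_{ij,k}; only its values for s < t
   are constrained / used. *)

Definition cube := nat -> nat -> nat -> nat -> nat -> R.

Definition in_simplex (x : nat -> R) : Prop :=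
  (forall n, 0 <= x n) /\ is_series x 1.

Definition xr (P : cube) (x0 : nat -> R) (r : nat) (k : nat) : R :=
  match r with
  | O => x0 k
  | S _ => Series (fun i => Series (fun j => P O r i j k * x0 i * x0 j))
  end.

Definition typeA (P : cube) (x0 : nat -> R) : Prop :=
  forall s r t, (s < r)%nat -> (r < t)%nat -> forall i j k,
    P s t i j k =
    Series (fun m => Series (fun l => P s r i j m * P r t m l k * xr P x0 r l)).

Definition typeB (P : cube) (x0 : nat -> R) : Prop :=
  forall s r t, (s < r)%nat -> (r < t)%nat -> forall i j k,
    P s t i j k =
    Series (fun m => Series (fun l => Series (fun g => Series (fun h =>
      P s r i m l * P s r j g h * P r t l h k * xr P x0 s m * xr P x0 s g)))).

Definition is_qsp (P : cube) (x0 : nat -> R) : Prop :=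
  in_simplex x0 /\
  (forall s t i j k, (s < t)%nat -> P s t i j k = P s t j i k) /\
  (forall s t i j k, (s < t)%nat -> 0 <= P s t i j k) /\
  (forall s t i j, (s < t)%nat -> is_series (fun k => P s t i j k) 1) /\
  (typeA P x0 \/ typeB P x0).

Definition Hmat (P : cube) (x0 : nat -> R) (m n i j : nat) : R :=
  Series (fun l => P m n i l j * xr P x0 m l).

Definition stochastic (A : nat -> nat -> R) : Prop :=
  (forall i j, 0 <= A i j) /\ (forall i, is_series (fun j => A i j) 1).

From Stdlib Require Import Reals Lra Lia.
From Coquelicot Require Import Coquelicot.
(* Imported after Reals, whose Rgeom.xr would otherwise shadow Defs.xr. *)
From Pilot Require Import Defs.
Open Scope R_scope.

(* All identities involved are rearrangements of nonnegative series whose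
   terms are dominated by probability weights, so Tonelli's theorem justifies
   each exchange of summations.  Type (A) reads
   P^{[m,l]}_{ia,j} = sum_k P^{[m,n]}_{ia,k} H^{n,l}_{kj}, and averaging over a
   against x^{(m)} gives Chapman-Kolmogorov at once.  Type (B) factors as
   P^{[s,t]}_{ij,k} = sum_l H^{s,r}_{il} sum_h H^{s,r}_{jh} P^{[r,t]}_{lh,k},
   which yields Chapman-Kolmogorov at (m,n,l) as soon as x^{(n)} = x^{(m)} H^{m,n}.
   That relation holds by definition for m = 0, and for m > 0 it follows from
   Chapman-Kolmogorov at (0,m,n). *)

Section NonnegSeries.
Variable a : nat -> R.
Hypothesis a_ge0 : forall n, 0 <= a n.

Lemma sum_n_ge0 n : 0 <= sum_n a n.
Proof.
  induction n as [|n IH]; [rewrite sum_O; apply a_ge0|].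
  rewrite sum_Sn; unfold plus; simpl. pose proof (a_ge0 (S n)). lra.
Qed.

Lemma sum_n_le_succ n : sum_n a n <= sum_n a (S n).
Proof. rewrite sum_Sn; unfold plus; simpl. pose proof (a_ge0 (S n)). lra. Qed.

Lemma ex_series_bounded_sums (B : R) : (forall n, sum_n a n <= B) -> ex_series a.
Proof.
  intros HB. destruct (ex_finite_lim_seq_incr (sum_n a) B sum_n_le_succ HB) as [l Hl].
  now exists l.
Qed.

Hypothesis a_sum : ex_series a.

Lemma sum_n_le_Series n : sum_n a n <= Series a.
Proof.
  apply is_lim_seq_incr_compare; [exact (Series_correct _ a_sum) | exact sum_n_le_succ].
Qed.

Lemma term_le_Series n : a n <= Series a.
Proof.
  eapply Rle_trans; [|apply sum_n_le_Series].
  destruct n as [|n]; [rewrite sum_O; lra|].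
  rewrite sum_Sn; unfold plus; simpl. pose proof (sum_n_ge0 n). lra.
Qed.

Lemma Series_ge0 : 0 <= Series a.
Proof. exact (Rle_trans _ _ _ (a_ge0 0) (term_le_Series 0)). Qed.

End NonnegSeries.

Lemma ex_series_nonneg_le (a b : nat -> R) :
  (forall n, 0 <= a n <= b n) -> ex_series b -> ex_series a.
Proof.
  intros ab b_sum. apply (ex_series_le a b); [|exact b_sum].
  intro n. unfold norm; simpl; unfold abs; simpl.
  rewrite Rabs_pos_eq; apply ab.
Qed.

Lemma Series_ext_scal_l (f g : nat -> R) (c : R) :
  (forall n, f n = c * g n) -> Series f = c * Series g.
Proof. intros fg. rewrite <- Series_scal_l. now apply Series_ext. Qed.

Lemma is_series_sum_n (f : nat -> nat -> R) :
  (forall j, ex_series (fun i => f i j)) -> forall M,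
  is_series (fun i => sum_n (f i) M) (sum_n (fun j => Series (fun i => f i j)) M).
Proof.
  intros cols_sum M. induction M as [|M IH].
  - rewrite sum_O. apply (is_series_ext (fun i => f i 0%nat)); [intro i; now rewrite sum_O|].
    exact (Series_correct _ (cols_sum 0%nat)).
  - rewrite sum_Sn.
    apply (is_series_ext (fun i => plus (sum_n (f i) M) (f i (S M)))).
    { intro i. now rewrite sum_Sn. }
    exact (is_series_plus _ _ _ _ IH (Series_correct _ (cols_sum (S M)))).
Qed.

Section Tonelli.
Variable f : nat -> nat -> R.
Hypothesis f_ge0 : forall i j, 0 <= f i j.
Hypothesis rows_sum : forall i, ex_series (f i).
Hypothesis total_sum : ex_series (fun i => Series (f i)).

Lemma Series_swap_le :
  (forall j, ex_series (fun i => f i j)) /\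
  ex_series (fun j => Series (fun i => f i j)) /\
  Series (fun j => Series (fun i => f i j)) <= Series (fun i => Series (f i)).
Proof.
  set (total := Series (fun i => Series (f i))).
  assert (rowsum_ge0 : forall i, 0 <= Series (f i)) by (intro i; now apply Series_ge0).
  assert (cols_sum : forall j, ex_series (fun i => f i j)).
  { intro j. apply (ex_series_bounded_sums _ (fun i => f_ge0 i j) total). intro N.
    eapply Rle_trans; [|exact (sum_n_le_Series _ rowsum_ge0 total_sum N)].
    rewrite !sum_n_Reals. apply sum_Rle. intros i _. now apply term_le_Series. }
  assert (colsum_ge0 : forall j, 0 <= Series (fun i => f i j)) by (intro j; now apply Series_ge0).
  assert (partial_le : forall M, sum_n (fun j => Series (fun i => f i j)) M <= total).
  { intro M. rewrite <- (is_series_unique _ _ (is_series_sum_n f cols_sum M)).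
    apply Series_le; [|exact total_sum].
    intro i. split; [now apply sum_n_ge0 | now apply sum_n_le_Series]. }
  assert (cols_total : ex_series (fun j => Series (fun i => f i j)))
    by exact (ex_series_bounded_sums _ colsum_ge0 total partial_le).
  repeat split; try assumption.
  apply (is_lim_seq_le _ (fun _ => total) (Series _) total partial_le);
    [exact (Series_correct _ cols_total) | apply is_lim_seq_const].
Qed.

End Tonelli.

Lemma is_series_Series_swap (f : nat -> nat -> R) :
  (forall i j, 0 <= f i j) -> (forall i, ex_series (f i)) ->
  ex_series (fun i => Series (f i)) ->
  is_series (fun j => Series (fun i => f i j)) (Series (fun i => Series (f i))).
Proof.
  intros f_ge0 rows_sum total_sum.
  destruct (Series_swap_le f f_ge0 rows_sum total_sum) as (cols_sum & cols_total & le_total).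
  destruct (Series_swap_le (fun j i => f i j) (fun j i => f_ge0 i j) cols_sum cols_total)
    as (_ & _ & total_le).
  replace (Series (fun i => Series (f i))) with (Series (fun j => Series (fun i => f i j)))
    by now apply Rle_antisym.
  exact (Series_correct _ cols_total).
Qed.

Definition subprob (v : nat -> R) : Prop :=
  (forall n, 0 <= v n) /\ ex_series v /\ Series v <= 1.

Lemma in_simplex_ext (v w : nat -> R) :
  (forall n, v n = w n) -> in_simplex v -> in_simplex w.
Proof.
  intros vw [v_ge0 v_sum]. split; [intro n; rewrite <- vw; apply v_ge0|].
  exact (is_series_ext _ _ _ vw v_sum).
Qed.

Lemma in_simplex_subprob {v : nat -> R} : in_simplex v -> subprob v.
Proof.
  intros [v_ge0 v_sum]. split; [exact v_ge0|]. split; [now exists 1|].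
  rewrite (is_series_unique _ _ v_sum). lra.
Qed.

Lemma subprob_Series_bounds (v : nat -> R) : subprob v -> 0 <= Series v <= 1.
Proof. intros (v_ge0 & v_sum & v_le1). split; [now apply Series_ge0 | exact v_le1]. Qed.

Lemma subprob_bounds (v : nat -> R) : subprob v -> forall n, 0 <= v n <= 1.
Proof.
  intros (v_ge0 & v_sum & v_le1) n. split; [apply v_ge0|].
  exact (Rle_trans _ _ _ (term_le_Series v v_ge0 v_sum n) v_le1).
Qed.

Lemma subprob_mul (v c : nat -> R) :
  subprob v -> (forall n, 0 <= c n <= 1) -> subprob (fun n => v n * c n).
Proof.
  intros (v_ge0 & v_sum & v_le1) c_bounds.
  assert (vc_bounds : forall n, 0 <= v n * c n <= v n).
  { intro n. destruct (c_bounds n). pose proof (v_ge0 n). split; nra. }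
  split; [intro n; apply vc_bounds|]. split; [exact (ex_series_nonneg_le _ _ vc_bounds v_sum)|].
  exact (Rle_trans _ _ _ (Series_le _ _ vc_bounds v_sum) v_le1).
Qed.

Definition vecmx (a : nat -> R) (A : nat -> nat -> R) (j : nat) : R :=
  Series (fun i => a i * A i j).

Section Mixtures.
Variable a : nat -> R.
Hypothesis a_sub : subprob a.

Lemma is_series_vecmx (U : nat -> nat -> R) : (forall i, subprob (U i)) ->
  is_series (vecmx a U) (Series (fun i => a i * Series (U i))).
Proof.
  intros U_sub. destruct a_sub as (a_ge0 & a_sum & _).
  rewrite <- (Series_ext (fun i => Series (fun l => a i * U i l)))
    by (intro i; apply Series_scal_l).
  apply is_series_Series_swap.
  - intros i l. apply Rmult_le_pos; [apply a_ge0 | apply (U_sub i)].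
  - intro i. apply (ex_series_scal_l (a i) (U i)), (U_sub i).
  - apply (ex_series_nonneg_le _ a); [|exact a_sum]. intro i.
    rewrite Series_scal_l. destruct (subprob_Series_bounds _ (U_sub i)).
    pose proof (a_ge0 i). split; nra.
Qed.

Lemma is_series_vecmx_assoc (V : nat -> nat -> R) (c : nat -> R) :
  (forall g, subprob (V g)) -> (forall h, 0 <= c h <= 1) ->
  is_series (fun h => vecmx a V h * c h) (Series (fun g => a g * Series (fun h => V g h * c h))).
Proof.
  intros V_sub c_bounds.
  apply (is_series_ext (vecmx a (fun g h => V g h * c h))).
  - intro h. unfold vecmx. rewrite <- Series_scal_r. apply Series_ext. intro g. ring.
  - apply is_series_vecmx. intro g. now apply subprob_mul.
Qed.

Lemma vecmx_assoc (V : nat -> nat -> R) (c : nat -> R) :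
  (forall g, subprob (V g)) -> (forall h, 0 <= c h <= 1) ->
  Series (fun h => vecmx a V h * c h) = Series (fun g => a g * Series (fun h => V g h * c h)).
Proof.
  intros V_sub c_bounds. exact (is_series_unique _ _ (is_series_vecmx_assoc V c V_sub c_bounds)).
Qed.

Lemma is_series_weighted_swap (b : nat -> R) (T : nat -> nat -> R) :
  subprob b -> (forall i j, 0 <= T i j <= 1) ->
  is_series (fun j => b j * Series (fun i => a i * T i j))
            (Series (fun i => a i * Series (fun j => b j * T i j))).
Proof.
  intros b_sub T_bounds.
  apply (is_series_ext (vecmx a (fun i j => b j * T i j))).
  - intro j. unfold vecmx. rewrite <- Series_scal_l. apply Series_ext. intro i. ring.
  - apply is_series_vecmx. intro i. now apply subprob_mul.
Qed.

End Mixtures.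

Lemma vecmx_simplex (a : nat -> R) (U : nat -> nat -> R) :
  in_simplex a -> (forall i, in_simplex (U i)) -> in_simplex (vecmx a U).
Proof.
  intros a_simplex U_simplex. pose proof a_simplex as [a_ge0 a_sum].
  assert (entry_bounds : forall i l, 0 <= a i * U i l <= a i).
  { intros i l. destruct (subprob_bounds _ (in_simplex_subprob (U_simplex i)) l).
    pose proof (a_ge0 i). split; nra. }
  split.
  - intro l. apply Series_ge0; [intro i; apply entry_bounds|].
    apply (ex_series_nonneg_le _ a); [intro i; apply entry_bounds | now exists 1].
  - replace 1 with (Series (fun i => a i * Series (U i))).
    + apply is_series_vecmx; [exact (in_simplex_subprob a_simplex)|].
      intro i. exact (in_simplex_subprob (U_simplex i)).
    + rewrite <- (is_series_unique _ _ a_sum). apply Series_ext. intro i.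
      rewrite (is_series_unique _ _ (proj2 (U_simplex i))). ring.
Qed.

Section QSP.
Variables (P : cube) (x0 : nat -> R).
Hypothesis hP : is_qsp P x0.

Lemma P_simplex s t i j : (s < t)%nat -> in_simplex (P s t i j).
Proof. intro st. destruct hP as (_ & _ & P_ge0 & P_sum & _). split; auto. Qed.

Lemma P_bounds s t i j k : (s < t)%nat -> 0 <= P s t i j k <= 1.
Proof. intro st. exact (subprob_bounds _ (in_simplex_subprob (P_simplex s t i j st)) k). Qed.

Lemma Hmat_vecmx m n i j : Hmat P x0 m n i j = vecmx (xr P x0 m) (P m n i) j.
Proof. apply Series_ext. intro l. apply Rmult_comm. Qed.

Lemma xr_vecmx_Hmat0 r k : (0 < r)%nat -> xr P x0 r k = vecmx x0 (Hmat P x0 0 r) k.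
Proof.
  destruct r as [|r]; [lia|]. intros _.
  apply Series_ext. intro i. apply Series_ext_scal_l. intro j. simpl. ring.
Qed.

Lemma xr_simplex r : in_simplex (xr P x0 r).
Proof.
  destruct r as [|r]; [exact (proj1 hP)|].
  apply (in_simplex_ext (vecmx x0 (Hmat P x0 0 (S r)))).
  { intro k. symmetry. apply xr_vecmx_Hmat0. lia. }
  apply vecmx_simplex; [exact (proj1 hP)|]. intro i.
  apply (in_simplex_ext (vecmx x0 (P 0%nat (S r) i))); [intro j; symmetry; apply Hmat_vecmx|].
  apply vecmx_simplex; [exact (proj1 hP)|]. intro l. apply P_simplex. lia.
Qed.

Lemma Hmat_simplex m n i : (m < n)%nat -> in_simplex (Hmat P x0 m n i).
Proof.
  intro mn. apply (in_simplex_ext (vecmx (xr P x0 m) (P m n i))).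
  { intro j. symmetry. apply Hmat_vecmx. }
  apply vecmx_simplex; [apply xr_simplex | intro l; now apply P_simplex].
Qed.

Lemma Hmat_bounds m n i j : (m < n)%nat -> 0 <= Hmat P x0 m n i j <= 1.
Proof. intro mn. exact (subprob_bounds _ (in_simplex_subprob (Hmat_simplex m n i mn)) j). Qed.

Lemma Hmat_chapman_kolmogorov_typeA : typeA P x0 -> forall m n l,
  (m < n)%nat -> (n < l)%nat -> forall i j,
  is_series (fun k => Hmat P x0 m n i k * Hmat P x0 n l k j) (Hmat P x0 m l i j).
Proof.
  intros hA m n l mn nl i j.
  assert (P_row : forall a, P m l i a j = Series (fun k => P m n i a k * Hmat P x0 n l k j)).
  { intro a. rewrite (hA m n l mn nl). apply Series_ext. intro k.
    apply Series_ext_scal_l. intro b. ring. }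
  replace (Hmat P x0 m l i j)
    with (Series (fun a => xr P x0 m a * Series (fun k => P m n i a k * Hmat P x0 n l k j))).
  - apply (is_series_ext (fun k => vecmx (xr P x0 m) (P m n i) k * Hmat P x0 n l k j)).
    { intro k. now rewrite (Hmat_vecmx m n i k). }
    apply is_series_vecmx_assoc.
    + exact (in_simplex_subprob (xr_simplex m)).
    + intro a. exact (in_simplex_subprob (P_simplex m n i a mn)).
    + intro k. now apply Hmat_bounds.
  - rewrite Hmat_vecmx. apply Series_ext. intro a. now rewrite P_row.
Qed.

Section TypeB.
Hypothesis hB : typeB P x0.

Lemma typeB_factor s r t i j k : (s < r)%nat -> (r < t)%nat ->
  P s t i j k =
  Series (fun l => Hmat P x0 s r i l * Series (fun h => Hmat P x0 s r j h * P r t l h k)).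
Proof.
  intros sr rt.
  set (x := xr P x0 s).
  set (T l := Series (fun h => Hmat P x0 s r j h * P r t l h k)).
  assert (T_bounds : forall l, 0 <= T l <= 1).
  { intro l. apply subprob_Series_bounds, subprob_mul.
    - exact (in_simplex_subprob (Hmat_simplex s r j sr)).
    - intro h. now apply P_bounds. }
  assert (T_vecmx : forall l,
    Series (fun g => x g * Series (fun h => P s r j g h * P r t l h k)) = T l).
  { intro l. rewrite <- vecmx_assoc.
    - apply Series_ext. intro h. now rewrite Hmat_vecmx.
    - exact (in_simplex_subprob (xr_simplex s)).
    - intro g. exact (in_simplex_subprob (P_simplex s r j g sr)).
    - intro h. now apply P_bounds. }
  rewrite (hB s r t sr rt). fold x.
  transitivity (Series (fun m => x m * Series (fun l => P s r i m l * T l))).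
  - apply Series_ext. intro m. apply Series_ext_scal_l. intro l.
    rewrite <- T_vecmx, <- Rmult_assoc. apply Series_ext_scal_l. intro g.
    rewrite <- Rmult_assoc. apply Series_ext_scal_l. intro h. ring.
  - rewrite <- vecmx_assoc.
    + apply Series_ext. intro l. now rewrite Hmat_vecmx.
    + exact (in_simplex_subprob (xr_simplex s)).
    + intro m. exact (in_simplex_subprob (P_simplex s r i m sr)).
    + exact T_bounds.
Qed.

Lemma Hmat_chapman_kolmogorov_typeB m n l : (m < n)%nat -> (n < l)%nat ->
  (forall h, xr P x0 n h = vecmx (xr P x0 m) (Hmat P x0 m n) h) -> forall i j,
  is_series (fun k => Hmat P x0 m n i k * Hmat P x0 n l k j) (Hmat P x0 m l i j).
Proof.
  intros mn nl xr_n i j.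
  set (x := xr P x0 m).
  set (K a d := Series (fun h => Hmat P x0 m n a h * P n l d h j)).
  assert (K_bounds : forall a d, 0 <= K a d <= 1).
  { intros a d. apply subprob_Series_bounds, subprob_mul.
    - exact (in_simplex_subprob (Hmat_simplex m n a mn)).
    - intro h. now apply P_bounds. }
  assert (K_average : forall d, Series (fun a => x a * K a d) = Hmat P x0 n l d j).
  { intro d. unfold K. rewrite <- vecmx_assoc.
    - apply Series_ext. intro h. rewrite <- xr_n. apply Rmult_comm.
    - exact (in_simplex_subprob (xr_simplex m)).
    - intro a. exact (in_simplex_subprob (Hmat_simplex m n a mn)).
    - intro h. now apply P_bounds. }
  replace (Hmat P x0 m l i j)
    with (Series (fun a => x a * Series (fun d => Hmat P x0 m n i d * K a d))).
  - apply (is_series_ext (fun d => Hmat P x0 m n i d * Series (fun a => x a * K a d))).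
    { intro d. now rewrite K_average. }
    apply is_series_weighted_swap.
    + exact (in_simplex_subprob (xr_simplex m)).
    + exact (in_simplex_subprob (Hmat_simplex m n i mn)).
    + exact K_bounds.
  - rewrite Hmat_vecmx. apply Series_ext. intro a. now rewrite (typeB_factor m n l i a j).
Qed.

Lemma xr_vecmx_Hmat m n : (m < n)%nat ->
  forall h, xr P x0 n h = vecmx (xr P x0 m) (Hmat P x0 m n) h.
Proof.
  intros mn h. destruct m as [|m]; [now apply xr_vecmx_Hmat0|].
  rewrite (xr_vecmx_Hmat0 n h) by lia.
  transitivity (Series (fun i =>
    x0 i * Series (fun k => Hmat P x0 0 (S m) i k * Hmat P x0 (S m) n k h))).
  - apply Series_ext. intro i. f_equal. symmetry. apply is_series_unique.
    apply Hmat_chapman_kolmogorov_typeB; [lia | exact mn |].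
    intro k. apply xr_vecmx_Hmat0. lia.
  - rewrite <- vecmx_assoc.
    + apply Series_ext. intro k. now rewrite <- xr_vecmx_Hmat0 by lia.
    + exact (in_simplex_subprob (proj1 hP)).
    + intro i. exact (in_simplex_subprob (Hmat_simplex 0 (S m) i ltac:(lia))).
    + intro k. now apply Hmat_bounds.
Qed.

End TypeB.

End QSP.

Theorem lemma2p3 (P : cube) (x0 : nat -> R) (hP : is_qsp P x0) :
  (forall m n, (m < n)%nat -> stochastic (Hmat P x0 m n)) /\
  (forall m n l, (m < n)%nat -> (n < l)%nat -> forall i j,
     is_series (fun k => Hmat P x0 m n i k * Hmat P x0 n l k j)
               (Hmat P x0 m l i j)).
Proof.
  split.
  - intros m n mn. split; intro i; [intro j|]; apply (Hmat_simplex P x0 hP m n i mn).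
  - intros m n l mn nl. pose proof hP as (_ & _ & _ & _ & [hA | hB]).
    + exact (Hmat_chapman_kolmogorov_typeA P x0 hP hA m n l mn nl).
    + apply (Hmat_chapman_kolmogorov_typeB P x0 hP hB m n l mn nl).
      exact (xr_vecmx_Hmat P x0 hP hB m n mn).
Qed.
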